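(* Let $\mathbf{H}\in\mathbb{R}^{m\times n}$ have full column rank and let $\mathcal{S}_A,\mathcal{S}_F\subseteq\{1,\dots,m\}$ be disjoint, $\mathcal{A}=\{\mathbf{a}\in\mathbb{R}^m: a_i=0\ \forall i\notin\mathcal{S}_A\}$. Let $\mathbf{U}\in\mathbb{R}^{m\times n}$ be any matrix whose columns form a basis of $\mathcal{R}(\mathbf{H})$. Define $\tilde{\mathbf{W}}=\mathbf{I}-\mathbf{U}(\mathbf{U}^T\mathbf{U})^{-1}\mathbf{U}^T$, the diagonal matrix $\tilde{\mathbf{\Omega}}\in\mathbb{R}^{m\times m}$ with $\tilde{\mathbf{\Omega}}_{ii}=1/\sqrt{\tilde{\mathbf{W}}_{ii}}$ if $\tilde{\mathbf{W}}_{ii}>0$ and $\tilde{\mathbf{\Omega}}_{ii}=0$ if $\tilde{\mathbf{W}}_{ii}=0$, the row selection matrix $\mathbf{I}_{\mathcal{S}_F}\in\mathbb{R}^{|\mathcal{S}_F|\times m}$ retaining the rows indexed by $\mathcal{S}_F$, and $\mathbf{U}_1$ (resp. $\mathbf{H}_1$) obtained from $\mathbf{U}$ (resp. $\mathbf{H}$) by replacing the rows indexed by $\mathcal{S}_F$ with zero rows. Consider (P1) maximize $\mathbb{E}\big[\sum_{i\in\mathcal{S}_F}\tilde r_i^2\big]$ over $\mathbf{a}$ subject to $\|\mathbf{a}\|_2^2=1$, $\mathbf{a}\in\mathcal{R}(\mathbf{H}_1)\cap\mathcal{A}$, (P2) maximize $\|\mathbf{I}_{\mathcal{S}_F}\tilde{\mathbf{\Omega}}\tilde{\mathbf{W}}\mathbf{a}\|_2^2$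 over $\mathbf{a}$ subject to $\|\mathbf{a}\|_2^2=1$, $\mathbf{a}\in\mathcal{R}(\mathbf{U}_1)\cap\mathcal{A}$, where in (P1) $\tilde{\mathbf{r}}$ is the normalized residue vector defined in the context. Then a vector is a solution of (P2) if and only if it is a solution of (P1).
   Context: Measurement model: $\mathbf{z}=\mathbf{H}\mathbf{x}+\mathbf{e}$ with fixed state $\mathbf{x}$ and $\mathbf{e}\sim\mathcal{N}(\mathbf{0},\sigma^2\mathbf{I})$; the adversary adds $\mathbf{a}\in\mathcal{A}$, giving $\mathbf{z}+\mathbf{a}$. Let $\mathbf{W}=\mathbf{I}-\mathbf{H}(\mathbf{H}^T\mathbf{H})^{-1}\mathbf{H}^T$; the residue is $\mathbf{r}=\mathbf{W}(\mathbf{z}+\mathbf{a})$ and the normalized residue is $\tilde{\mathbf{r}}=\mathbf{\Omega}\mathbf{r}$, where $\mathbf{\Omega}$ is diagonal with $\mathbf{\Omega}_{ii}=0$ if removing row $i$ from $\mathbf{H}$ makes it lose full column rank, and $\mathbf{\Omega}_{ii}=1/\sqrt{\sigma^2\mathbf{W}_{ii}}$ otherwise. The expectation in (P1) is over $\mathbf{e}$. $\mathcal{S}_A$ is the set of adversary-controlled sensors and $\mathcal{S}_F$ the set of sensors to be framed (made to appear as bad data). *)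

From HB Require Import structures.
From mathcomp Require Import all_boot all_order all_algebra.
From mathcomp Require Import all_classical all_reals all_analysis.

Set Implicit Arguments.
Unset Strict Implicit.
Unset Printing Implicit Defensive.

Import Order.TTheory GRing.Theory Num.Theory.
Local Open Scope classical_set_scope.
Local Open Scope ring_scope.

Section Defs.
Context {R : realType}.

Definition sqnorm k (v : 'cV[R]_k) : R := \sum_(i < k) v i 0 ^+ 2.

Definition full_col_rank m n (A : 'M[R]_(m, n)) : bool := \rank A == n.

Definition in_range m n (A : 'M[R]_(m, n)) (v : 'cV[R]_m) : Prop :=
  exists y : 'cV[R]_n, v = A *m y.

Definition col_basis_of m n k (U : 'M[R]_(m, k)) (H : 'M[R]_(m, n)) : Prop :=
  (forall v, in_range U v <-> in_range H v) /\ full_col_rank U.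

Definition resid_mx m n (A : 'M[R]_(m, n)) : 'M[R]_m :=
  1%:M - A *m invmx (A^T *m A) *m A^T.

Definition zero_rows m n (S : {set 'I_m}) (A : 'M[R]_(m, n)) : 'M[R]_(m, n) :=
  \matrix_(i, j) (if i \in S then 0 else A i j).

Definition attack_space m (SA : {set 'I_m}) (a : 'cV[R]_m) : Prop :=
  forall i, i \notin SA -> a i 0 = 0.

(* row selection matrix I_S (|S| x m), rows indexed by S in increasing order *)
Definition row_sel m (S : {set 'I_m}) : 'M[R]_(#|S|, m) :=
  \matrix_(k, j) ((enum_val k == j)%:R).

Definition Omega_tilde m (W : 'M[R]_m) : 'M[R]_m :=
  \matrix_(i, j) (if i == j then (if 0 < W i i then (Num.sqrt (W i i))^-1 else 0)
                  else 0).

(* Omega of the context: Omega_ii = 0 if removing row i of H makes it lose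
   full column rank, and 1/sqrt(sigma^2 W_ii) otherwise *)
Definition Omega_ctx m n (H : 'M[R]_(m, n)) (sigma : R) : 'M[R]_m :=
  \matrix_(i, j) (if i == j then
                    (if full_col_rank (row' i H)
                     then (Num.sqrt (sigma ^+ 2 * resid_mx H i i))^-1 else 0)
                  else 0).

End Defs.

Definition mutually_independent {R : realType} {d} {T : measurableType d}
  (P : probability T R) m (X : 'I_m -> {RV P >-> R}) : Prop :=
  forall B : 'I_m -> set R, (forall i, measurable (B i)) ->
    P (\bigcap_(i in [set: 'I_m]) (X i @^-1` B i)) =
    (\prod_(i < m) P (X i @^-1` B i))%E.

Definition gaussian_noise {R : realType} {d} {T : measurableType d}
  (P : probability T R) m (e : 'I_m -> {RV P >-> R}) (sigma : R) : Prop :=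
  mutually_independent e /\
  forall i (B : set R), measurable B ->
    distribution P (e i) B = normal_prob 0 sigma B.

Definition is_maximizer {V : Type} {disp} {O : porderType disp}
  (feas : V -> Prop) (f : V -> O) (a : V) : Prop :=
  feas a /\ forall b, feas b -> (f b <= f a)%O.

From HB Require Import structures.
From mathcomp Require Import all_boot all_order all_algebra.
From mathcomp Require Import all_classical all_reals all_analysis.
From mathcomp Require Import measurable_realfun ring.

(* Since U and H have the same column space, W~ = W and R(U1) = R(H1), so (P1)
   and (P2) have the same feasible set.  A row whose deletion destroys full
   column rank has W_ii = 0, which gives Omega = sigma^-1 Omega~.  As W H = 0,
   the normalized residue is r~ = sigma^-1 Omega~ W~ a + Omega W e, whose noise
   part is centred and square integrable; hence the objective of (P1) equals
   sigma^-2 times that of (P2) plus a constant that does not depend on a. *)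

Set Implicit Arguments.
Unset Strict Implicit.
Unset Printing Implicit Defensive.

Import Order.TTheory GRing.Theory Num.Theory.
Local Open Scope ring_scope.

Section LeastSquares.
Context {R : realType}.

Lemma trmx_mul_self_eq0 m (w : 'rV[R]_m) : w *m w^T = 0 -> w = 0.
Proof.
move=> /(congr1 (fun M : 'M[R]_1 => M 0 0)); rewrite !mxE => hs.
have sq_ge0 k : 0 <= w 0 k * w^T k 0 by rewrite mxE -expr2 sqr_ge0.
apply/rowP => j; rewrite mxE.
have := @psumr_eq0P _ _ _ _ (fun k _ => sq_ge0 k) hs j isT.
by rewrite mxE -expr2 => /eqP; rewrite sqrf_eq0 => /eqP.
Qed.

Lemma gram_unitmx m n (A : 'M[R]_(m, n)) : full_col_rank A -> A^T *m A \in unitmx.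
Proof.
move=> hA; rewrite -row_free_unit; apply: inj_row_free => v hv.
have frAt : row_free A^T by rewrite /row_free mxrank_tr.
apply: (row_free_inj frAt); rewrite mul0mx; apply: trmx_mul_self_eq0.
by rewrite trmx_mul trmxK mulmxA -(mulmxA v) hv mul0mx.
Qed.

Lemma full_col_rank_mulmx_eq0 m n p (A : 'M[R]_(m, n)) (X : 'M[R]_(n, p)) :
  full_col_rank A -> A *m X = 0 -> X = 0.
Proof.
move=> hA hX; rewrite -(mulKmx (gram_unitmx hA) X) -mulmxA (mulmxA A^T) -mulmxA.
by rewrite hX !mulmx0.
Qed.

Lemma resid_mx_mul m n (A : 'M[R]_(m, n)) : full_col_rank A -> resid_mx A *m A = 0.
Proof.
move=> hA; rewrite /resid_mx mulmxBl mul1mx -!mulmxA mulVmx ?mulmx1 ?subrr //.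
exact: gram_unitmx.
Qed.

Lemma invmxM n (A B : 'M[R]_n) : A \in unitmx -> B \in unitmx ->
  invmx (A *m B) = invmx B *m invmx A.
Proof.
move=> uA uB; have uAB : A *m B \in unitmx by rewrite unitmx_mul uA.
apply: (can_inj (mulKmx uAB)).
by rewrite mulmxV // mulmxA -(mulmxA A) mulmxV // mulmx1 mulmxV.
Qed.

Lemma col_mul m n p (A : 'M[R]_(m, n)) (B : 'M[R]_(n, p)) j :
  col j (A *m B) = A *m col j B.
Proof. by rewrite !colE mulmxA. Qed.

Lemma col_matrixP m n (A B : 'M[R]_(m, n)) : (forall j, col j A = col j B) -> A = B.
Proof.
move=> eqAB; apply/matrixP => i j.
by have := congr1 (fun v : 'cV_m => v i 0) (eqAB j); rewrite !mxE.
Qed.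

Lemma in_range_col m n (A : 'M[R]_(m, n)) j : in_range A (col j A).
Proof. by exists (delta_mx j 0); rewrite colE. Qed.

Lemma in_range_factor m n k (A : 'M[R]_(m, n)) (B : 'M[R]_(m, k)) :
  full_col_rank A -> (forall j, in_range A (col j B)) -> exists C, A *m C = B.
Proof.
move=> hA hB; exists (invmx (A^T *m A) *m A^T *m B); apply: col_matrixP => j.
have [y hy] := hB j; rewrite !col_mul hy !mulmxA -(mulmxA _ A^T A) -(mulmxA A).
by rewrite mulVmx ?gram_unitmx ?mulmx1.
Qed.

Lemma col_basis_factors m n (U H : 'M[R]_(m, n)) :
  full_col_rank H -> col_basis_of U H ->
  exists M N : 'M[R]_n, [/\ H *m M = U, U *m N = H & M *m N = 1%:M].
Proof.
move=> hH [sameR hU].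
have [M hM] : exists M, H *m M = U.
  by apply: in_range_factor => // j; apply/sameR/in_range_col.
have [N hN] : exists N, U *m N = H.
  by apply: in_range_factor => // j; apply/sameR/in_range_col.
exists M, N; split => //; apply/eqP; rewrite -subr_eq0; apply/eqP.
by apply: (full_col_rank_mulmx_eq0 hH); rewrite mulmxBr mulmxA hM hN mulmx1 subrr.
Qed.

Lemma resid_mx_col_basis m n (U H : 'M[R]_(m, n)) :
  full_col_rank H -> col_basis_of U H -> resid_mx U = resid_mx H.
Proof.
move=> hH hUH; have [M [N [<- _ /mulmx1_unit[uM _]]]] := col_basis_factors hH hUH.
have uMt : M^T \in unitmx by rewrite unitmx_tr.
rewrite /resid_mx trmx_mul -!mulmxA (mulmxA H^T) invmxM ?unitmx_mul ?gram_unitmx //.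
by rewrite invmxM ?gram_unitmx // -!mulmxA mulKVmx // mulKmx.
Qed.

Lemma zero_rows_mul m n p (S : {set 'I_m}) (A : 'M[R]_(m, n)) (X : 'M[R]_(n, p)) :
  zero_rows S (A *m X) = zero_rows S A *m X.
Proof.
apply/matrixP => i j; rewrite !mxE; case: ifP => iS.
  by rewrite big1 // => k _; rewrite mxE iS mul0r.
by apply: eq_bigr => k _; rewrite mxE iS.
Qed.

Lemma in_range_zero_rows_col_basis m n (S : {set 'I_m}) (U H : 'M[R]_(m, n)) v :
  full_col_rank H -> col_basis_of U H ->
  in_range (zero_rows S U) v <-> in_range (zero_rows S H) v.
Proof.
move=> hH hUH; have [M [N [hM hN _]]] := col_basis_factors hH hUH.
split=> -[y ->].
  by exists (M *m y); rewrite mulmxA -[zero_rows S H *m M]zero_rows_mul hM.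
by exists (N *m y); rewrite mulmxA -[zero_rows S U *m N]zero_rows_mul hN.
Qed.

Lemma in_range_delta_row' m n (H : 'M[R]_(m, n)) i :
  full_col_rank H -> ~~ full_col_rank (row' i H) -> in_range H (delta_mx i 0).
Proof.
(* z in ker (row' i H) but not in ker H makes H z a nonzero multiple of e_i *)
move=> hH hi; have : ~~ row_free (row' i H)^T by rewrite /row_free mxrank_tr.
rewrite -kermx_eq0 => /rowV0Pn[v /sub_kermxP hv v0].
have {}hv : row' i H *m v^T = 0 by rewrite -[LHS]trmxK trmx_mul trmxK hv trmx0.
have {v0} : v^T != 0 by rewrite trmx_eq0.
move: (v^T) hv => {v} z hv z0.
have Hz0 : H *m z != 0 by apply: contra z0 => /eqP /(full_col_rank_mulmx_eq0 hH) ->.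
have Hz_row' r : r != i -> (H *m z) r 0 = 0.
  case: (unliftP i r) => [k ->|->]; last by rewrite eqxx.
  move=> _; transitivity ((row' i H *m z) k 0); last by rewrite hv mxE.
  by rewrite !mxE; apply: eq_bigr => l _; rewrite row'Esub mxE.
have Hzi : (H *m z) i 0 != 0.
  apply: contra Hz0 => /eqP Hzi; apply/eqP/colP => r; rewrite [RHS]mxE.
  by case: (eqVneq r i) => [->|/Hz_row' ->].
exists (((H *m z) i 0)^-1 *: z); rewrite -scalemxAr; apply/colP => r.
rewrite [LHS]mxE [RHS]mxE eqxx andbT.
by case: (eqVneq r i) => [->|ri]; [rewrite mulVf | rewrite (Hz_row' r ri) mulr0].
Qed.

Lemma resid_mx_diag_eq0 m n (H : 'M[R]_(m, n)) i :
  full_col_rank H -> ~~ full_col_rank (row' i H) -> resid_mx H i i = 0.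
Proof.
move=> hH /(in_range_delta_row' hH)[y hy].
have : resid_mx H *m (delta_mx i 0 : 'cV_m) = 0.
  by rewrite hy mulmxA resid_mx_mul // mul0mx.
by rewrite -colE => /(congr1 (fun v : 'cV_m => v i 0)); rewrite !mxE.
Qed.

Lemma Omega_ctx_tilde m n (H : 'M[R]_(m, n)) sigma :
  full_col_rank H -> 0 < sigma ->
  Omega_ctx H sigma = sigma^-1 *: Omega_tilde (resid_mx H).
Proof.
move=> hH s0; rewrite /Omega_ctx /Omega_tilde.
have := @resid_mx_diag_eq0 _ _ H ^~ hH.
move: (resid_mx H) => W W0; apply/matrixP => i j; rewrite !mxE.
case: (eqVneq i j) => _; last by rewrite mulr0.
case: ifP => [_|/negbT/W0 ->]; last by rewrite ltxx mulr0.
rewrite sqrtrM ?sqr_ge0 // sqrtr_sqr gtr0_norm // invfM.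
(* if W_ii = 0, the entry 1/sqrt(sigma^2 W_ii) of Omega_ctx is 0^-1 = 0 *)
case: ifP => // Wii_gt0F.
rewrite (_ : Num.sqrt _ = 0) ?invr0 ?mulr0 //.
by apply/eqP; rewrite sqrtr_eq0 leNgt Wii_gt0F.
Qed.

Lemma sqnorm_row_sel m (S : {set 'I_m}) (v : 'cV[R]_m) :
  sqnorm (row_sel S *m v) = \sum_(i in S) v i 0 ^+ 2.
Proof.
rewrite /sqnorm [RHS]big_enum_val; apply: eq_bigr => k _.
rewrite mxE (bigD1 (enum_val k)) //= mxE eqxx mul1r big1 ?addr0 // => j kj.
by rewrite mxE eq_sym (negbTE kj) mul0r.
Qed.
End LeastSquares.

Section NormalDensity.
Local Open Scope classical_set_scope.
Context {R : realType}.
Local Notation mu := (@lebesgue_measure R).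

Lemma ge0_integral_normal_prob (m s : R) (f : R -> \bar R) :
  (forall x, 0 <= f x)%E -> measurable_fun setT f ->
  (\int[normal_prob m s]_x f x = \int[mu]_x (f x * (normal_pdf m s x)%:E))%E.
Proof.
move=> f0 mf; have numu := normal_prob_dominates m s.
rewrite -(Radon_Nikodym_SigmaFinite.change_of_variables numu f0 measurableT mf).
have mRN : measurable_fun setT (Radon_Nikodym_SigmaFinite.f (normal_prob m s) mu).
  exact: (measurable_int mu (Radon_Nikodym_SigmaFinite.f_integrable numu)).
have mpdf : measurable_fun setT (fun x => (normal_pdf m s x)%:E).
  by apply/measurable_EFinP; exact: measurable_normal_pdf.
apply: ae_eq_integral => //; do ?exact: emeasurable_funM.
apply: ae_eqe_mul2l; apply: integral_ae_eq => //.
  exact: Radon_Nikodym_SigmaFinite.f_integrable.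
by move=> E _ mE; rewrite -(Radon_Nikodym_SigmaFinite.f_integral numu mE).
Qed.

Variable s : R.
Hypothesis s_gt0 : 0 < s.

Lemma normal_pdfN x : normal_pdf 0 s (- x) = normal_pdf 0 s x.
Proof. by rewrite normal_pdfE ?gt_eqF // /normal_fun !subr0 sqrrN. Qed.

Lemma normal_probN (A : set R) : measurable A ->
  normal_prob 0 s (-%R @^-1` A) = normal_prob 0 s A.
Proof.
move=> mA; rewrite /normal_prob.
transitivity (\int[mu]_(x in -%R @^-1` A) ((fun y => (normal_pdf 0 s y)%:E) \o -%R) x)%E.
  by apply: eq_integral => x _ /=; rewrite normal_pdfN.
rewrite -(@ge0_integral_pushforward _ _ _ _ _
  (-%R : measurableTypeR R -> measurableTypeR R) _ mu) //=.
- by apply: eq_measure_integral => B mB _; exact: lebesgue_measureN.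
- by apply/measurable_EFinP/measurable_funTS; exact: measurable_normal_pdf.
- by move=> y _; rewrite lee_fin normal_pdf_ge0.
Qed.

(* With t = x^2 / (4 s^2) and t <= e^t:
   x^2 e^(-x^2/(2s^2)) = 4 s^2 t e^(-2t) <= 4 s^2 e^(-t),
   a multiple of the density of N(0, 2 s^2). *)
Lemma sqr_normal_pdf_le x :
  x ^+ 2 * normal_pdf 0 s x <=
  normal_peak s * (4 * s ^+ 2) / normal_peak (s * Num.sqrt 2) *
    normal_pdf 0 (s * Num.sqrt 2) x.
Proof.
set s' := s * Num.sqrt 2.
have s'_gt0 : 0 < s' by rewrite mulr_gt0 // sqrtr_gt0.
rewrite !normal_pdfE ?gt_eqF // /normal_fun !subr0.
set t := x ^+ 2 / (s' ^+ 2 *+ 2).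
have s'E : s' ^+ 2 *+ 2 = 4 * s ^+ 2.
  by rewrite /s' exprMn sqr_sqrtr // -mulr_natr -mulrA -natrM mulrC.
have xE : x ^+ 2 = 4 * s ^+ 2 * t by rewrite /t s'E; field; rewrite gt_eqF.
have expoE : - x ^+ 2 / (s ^+ 2 *+ 2) = - t + - t.
  by rewrite /t s'E; field; rewrite gt_eqF.
have t_le_expR : t <= expR t by apply: le_trans (expR_ge1Dx t); rewrite lerDr.
have peak_gt0 : 0 < normal_peak s' by apply: normal_peak_gt0; rewrite gt_eqF.
rewrite expoE expRD.
have -> : normal_peak s * (4 * s ^+ 2) / normal_peak s' *
    (normal_peak s' * expR (- x ^+ 2 / (s' ^+ 2 *+ 2))) =
    normal_peak s * (4 * s ^+ 2) * expR (- t).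
  by rewrite /t mulNr; field; rewrite gt_eqF.
rewrite xE; have -> : 4 * s ^+ 2 * t * (normal_peak s * (expR (- t) * expR (- t))) =
    normal_peak s * (4 * s ^+ 2) * (t * (expR (- t) * expR (- t))) by ring.
apply: ler_wpM2l; first by rewrite mulr_ge0 ?normal_peak_ge0 // mulr_ge0 // sqr_ge0.
apply: le_trans (_ : expR t * (expR (- t) * expR (- t)) <= _).
  by rewrite ler_wpM2r // ?mulr_ge0 ?expR_ge0.
by rewrite mulrA -expRD addrN expR0 mul1r.
Qed.

Lemma integral_sqr_normal_pdf_lty :
  (\int[mu]_x ((x ^+ 2)%:E * (normal_pdf 0 s x)%:E) < +oo)%E.
Proof.
set s' := s * Num.sqrt 2.
set K := normal_peak s * (4 * s ^+ 2) / normal_peak s'.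
apply: (@le_lt_trans _ _ (\int[mu]_x (K%:E * (normal_pdf 0 s' x)%:E))%E).
  apply: ge0_le_integral => //.
  - by move=> x _; rewrite -EFinM lee_fin mulr_ge0 ?sqr_ge0 ?normal_pdf_ge0.
  - apply: emeasurable_funM; apply/measurable_EFinP => //.
    exact: measurable_normal_pdf.
  - apply: emeasurable_funM => //; apply/measurable_EFinP.
    exact: measurable_normal_pdf.
  - by move=> x _; rewrite -!EFinM lee_fin; exact: sqr_normal_pdf_le.
rewrite integralZl //; last exact: integrable_normal_pdf.
by rewrite integral_normal_pdf mule1 ltry.
Qed.

End NormalDensity.

Section CenteredL2.
Local Open Scope classical_set_scope.
Context {R : realType} {d : measure_display} {T : measurableType d}.
Variable P : probability T R.

Definition centered_L2 (X : T -> R) := X \in Lfun P 2%:E /\ ('E_P[X] = 0)%E.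

Lemma Lfun2_sub_Lfun1 : {subset Lfun P 2%:E <= Lfun P 1}.
Proof. by apply: Lfun_subset12; exact: fin_num_measure. Qed.

Lemma Lfun_sumr p (I : Type) (r : seq I) (Q : pred I) (f : I -> T -> R) :
  (1 <= p)%E -> (forall i, f i \in Lfun P p) ->
  (fun w => \sum_(i <- r | Q i) f i w) \in Lfun P p.
Proof. by move=> p1 fL; rewrite -fct_sumE rpred_sum. Qed.

Lemma expectation_sumr (I : Type) (r : seq I) (Q : pred I) (f : I -> T -> R) :
  (forall i, f i \in Lfun P 1) ->
  ('E_P[fun w => (\sum_(i <- r | Q i) f i w)%R] = \sum_(i <- r | Q i) 'E_P[f i])%E.
Proof.
move=> fL; rewrite -fct_sumE; elim: r => [|i r IH].
  by rewrite !big_nil expectation_cst.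
rewrite !big_cons; case: (Q i) => //.
by rewrite expectationD ?IH ?rpred_sum.
Qed.

Lemma centered_L2_lincomb (J : finType) (Q : pred J) (k : J -> R) (X : J -> T -> R) :
  (forall j, centered_L2 (X j)) -> centered_L2 (fun w => \sum_(j | Q j) k j * X j w).
Proof.
move=> hX; have kXL2 j : (fun w => k j * X j w) \in Lfun P 2%:E.
  (* the submodule structure of [Lfun P p] is found from [1 <= p] in context *)
  have p1 : (1 <= 2%:E :> \bar R)%E by rewrite lee1n.
  exact: (rpredZ (k j) (hX j).1).
split; first exact: Lfun_sumr (lee1n 2) kXL2.
rewrite (expectation_sumr _ _ (fun j => Lfun2_sub_Lfun1 (kXL2 j))) big1 // => j _.
have -> : (fun w => k j * X j w) = k j \o* X j by apply/funext => w /=; rewrite mulrC.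
by rewrite expectationZl ?(hX j).2 ?mule0 //; apply/Lfun2_sub_Lfun1/(hX j).1.
Qed.

Lemma expectation_sum_sqrD (I : finType) (S : {set I}) (c : I -> R) (L : I -> T -> R) :
  (forall i, centered_L2 (L i)) ->
  ('E_P[fun w => (\sum_(i in S) (c i + L i w) ^+ 2)%R] =
   (\sum_(i in S) c i ^+ 2)%:E + 'E_P[fun w => (\sum_(i in S) L i w ^+ 2)%R])%E.
Proof.
move=> hL; set cross := fun w => \sum_(i in S) 2 * c i * L i w.
have [crossL2 crossE] : centered_L2 cross by exact: centered_L2_lincomb.
have sqrL1 : (fun w => \sum_(i in S) L i w ^+ 2) \in Lfun P 1.
  by apply: Lfun_sumr => // i; exact: Lfun2_mul_Lfun1 (hL i).1 (hL i).1.
have -> : (fun w => \sum_(i in S) (c i + L i w) ^+ 2) =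
    cst (\sum_(i in S) c i ^+ 2) \+ (cross \+ fun w => \sum_(i in S) L i w ^+ 2).
  by apply/funext => w; rewrite /= /cross -!big_split /=; apply: eq_bigr => i _; ring.
have crossL1 := Lfun2_sub_Lfun1 crossL2.
rewrite expectationD ?rpredD ?Lfun_cst // expectationD // crossE add0e.
by congr (_ + _)%E; exact: expectation_cst.
Qed.
End CenteredL2.

Section NormalRV.
Local Open Scope classical_set_scope.
Context {R : realType} {d : measure_display} {T : measurableType d}.
Variables (P : probability T R) (X : {RV P >-> R}) (s : R).
Hypotheses (s_gt0 : 0 < s)
  (X_normal : forall B, measurable B -> distribution P X B = normal_prob 0 s B).

Let ge0_integral_normal_rv (f : R -> \bar R) :
  measurable_fun setT f -> (forall y, 0 <= f y)%E ->
  (\int[P]_w f (X w) = \int[normal_prob 0 s]_y f y)%E.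
Proof.
move=> mf f0; have mX : measurable_fun setT (X : T -> measurableTypeR R).
  exact: (measurable_funP X).
transitivity (\int[pushforward P (X : T -> measurableTypeR R)]_y f y)%E.
  by rewrite ge0_integral_pushforward.
by apply: eq_measure_integral => A mA _; exact: X_normal.
Qed.

Lemma normal_rv_Lfun2 : (X : T -> R) \in Lfun P 2%:E.
Proof.
rewrite inE; apply/andP; split; first by rewrite inE /=; exact: measurable_funP.
rewrite inE /= /finite_norm unlock /Lnorm /=; apply: poweR_lty.
under eq_integral => x _ do rewrite powR_mulrn // real_normK ?num_real //.
rewrite (@ge0_integral_normal_rv (fun y => (y ^+ 2)%:E)) //; last first.
  by move=> y; rewrite lee_fin sqr_ge0.
  by apply/measurable_EFinP; exact: measurable_funX.
rewrite ge0_integral_normal_prob //; last first.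
  by apply/measurable_EFinP; exact: measurable_funX.
  by move=> y; rewrite lee_fin sqr_ge0.
exact: integral_sqr_normal_pdf_lty.
Qed.

Lemma normal_rv_centered_L2 : centered_L2 P X.
Proof.
split; first exact: normal_rv_Lfun2.
have intX : P.-integrable setT (EFin \o X).
  by apply/Lfun1_integrable/Lfun2_sub_Lfun1/normal_rv_Lfun2.
rewrite expectation_def integralE.
set h := fun y : R => maxe y%:E 0%E.
have mh : measurable_fun setT h by exact: measurable_maxe.
have h0 y : (0 <= h y)%E by rewrite /h le_max lexx orbT.
have Ep : (\int[P]_x (EFin \o X)^\+ x = \int[normal_prob 0 s]_y h y)%E.
  by under eq_integral do rewrite funeposE; exact: ge0_integral_normal_rv.
have En : (\int[P]_x (EFin \o X)^\- x = \int[normal_prob 0 s]_y h y)%E.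
  pose neg := -%R : measurableTypeR R -> measurableTypeR R.
  have mN : measurable_fun setT neg by exact: measurable_funN.
  transitivity (\int[normal_prob 0 s]_y h (- y)%R)%E.
    rewrite -ge0_integral_normal_rv //; last exact: measurableT_comp.
    by apply: eq_integral => x _; rewrite funenegE /h /= EFinN.
  transitivity (\int[pushforward (normal_prob 0 s) neg]_y h y)%E.
    by rewrite ge0_integral_pushforward // preimage_setT.
  by apply: eq_measure_integral => B mB _; exact: normal_probN.
rewrite Ep En subee // -Ep; apply: integrable_fin_num => //.
exact: integrable_funepos.
Qed.

End NormalRV.

Lemma is_maximizer_iff (V : Type) d1 d2 (O1 : porderType d1) (O2 : porderType d2)
    (F1 F2 : V -> Prop) (f1 : V -> O1) (f2 : V -> O2) :
  (forall b, F1 b <-> F2 b) -> (forall b c, (f1 b <= f1 c)%O = (f2 b <= f2 c)%O) ->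
  forall a, is_maximizer F1 f1 a <-> is_maximizer F2 f2 a.
Proof.
move=> F12 f12 a.
split=> -[/F12 Fa amax]; split=> // b /F12 Fb.
  by rewrite -f12; exact: amax.
by rewrite f12; exact: amax.
Qed.

Theorem theorem4 (R : realType) (m n : nat)
  (H : 'M[R]_(m, n)) (SA SF : {set 'I_m}) (U : 'M[R]_(m, n))
  (x : 'cV[R]_n) (sigma : R)
  (d : measure_display) (T : measurableType d) (P : probability T R)
  (e : 'I_m -> {RV P >-> R}) :
  full_col_rank H ->
  [disjoint SA & SF] ->
  col_basis_of U H ->
  0 < sigma ->
  gaussian_noise e sigma ->
  let Wt := resid_mx U in
  let Omt := Omega_tilde Wt in
  let U1 := zero_rows SF U in
  let H1 := zero_rows SF H in
  let W := resid_mx H in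
  let Om := Omega_ctx H sigma in
  let rtilde (a : 'cV[R]_m) (w : T) : 'cV[R]_m :=
    Om *m (W *m (H *m x + \col_i (e i w) + a)) in
  let feasP1 (a : 'cV[R]_m) := sqnorm a = 1 /\ in_range H1 a /\ attack_space SA a in
  let objP1 (a : 'cV[R]_m) : \bar R :=
    ('E_P[fun w => (\sum_(i in SF) rtilde a w i 0 ^+ 2)%R])%E in
  let feasP2 (a : 'cV[R]_m) := sqnorm a = 1 /\ in_range U1 a /\ attack_space SA a in
  let objP2 (a : 'cV[R]_m) : R := sqnorm (row_sel SF *m (Omt *m (Wt *m a))) in
  forall a : 'cV[R]_m, is_maximizer feasP2 objP2 a <-> is_maximizer feasP1 objP1 a.
Proof.
move=> hH _ hUH s_gt0 [_ e_normal] Wt Omt U1 H1 W Om rtilde feasP1 objP1 feasP2 objP2.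
have WtE : Wt = W by exact: resid_mx_col_basis.
have OmE : Om = sigma^-1 *: Omt by rewrite /Om /Omt WtE Omega_ctx_tilde.
pose L i w := \sum_j (Om *m W) i j * e j w.
have L_centered i : centered_L2 P (L i).
  by apply: centered_L2_lincomb => j; exact: normal_rv_centered_L2 (e_normal j).
have rtildeE b w i : rtilde b w i 0 = sigma^-1 * (Omt *m (Wt *m b)) i 0 + L i w.
  rewrite /rtilde !mulmxDr (mulmxA W H) /W resid_mx_mul // mul0mx mulmx0 add0r.
  rewrite addrC mxE; congr (_ + _); first by rewrite OmE WtE -scalemxAl mxE.
  by rewrite mulmxA mxE /L /=; apply: eq_bigr => j _; rewrite [in LHS]mxE.
have objE b : objP1 b =
    ((sigma^-1 ^+ 2 * objP2 b)%:E + 'E_P[fun w => (\sum_(i in SF) L i w ^+ 2)%R])%E.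
  rewrite /objP1 /objP2 sqnorm_row_sel mulr_sumr.
  under eq_fun => w do under eq_bigr => i _ do rewrite (rtildeE b w i).
  rewrite expectation_sum_sqrD //; congr (_%:E + _)%E.
  by apply: eq_bigr => i _; rewrite exprMn.
have sqrL_fin : ('E_P[fun w => (\sum_(i in SF) L i w ^+ 2)%R] \is a fin_num)%E.
  apply: expectation_fin_num; apply: Lfun_sumr => // i.
  exact: Lfun2_mul_Lfun1 (L_centered i).1 (L_centered i).1.
apply: is_maximizer_iff => [b|b c].
  have rangeE := in_range_zero_rows_col_basis SF b hH hUH.
  by split=> -[nb [rb ab]]; do !split=> //; apply/rangeE.
by rewrite !objE leeD2rE // lee_fin ler_pM2l // exprn_gt0 // invr_gt0.
Qed.
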